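(* Let $A$ be a sub-tree of $T$, $I\subseteq\mathcal{I}_A$, and let $I=I'\cup I''$ with $I'\cap I''=\emptyset$. For every $S\in\mathcal{M}_A^I$, setting $S'=S\cap V_A^{I'}$ and $S''=S\cap V_A^{I''}$, we have $S'\in\mathcal{M}_A^{I'}$ and $S''\in\mathcal{M}_A^{I''}$. In particular, $\mathcal{M}_A$ is contained in $\{S_0\cup S_1\cup\dots\cup S_m: S_i\in\mathcal{M}_A^{\{i\}}\}$.
   Context: Setting. $T$ is a finite tree rooted at $r_T$, node set $V_T$; every edge $e$ has weight $w_e\ge 0$. Every node $v$ has a probability $\pi_v\in(0,1]$ and a prize $p_v\in\mathbb{R}$. $d(v)$ is the total weight of the path from $r_T$ to $v$. A random set $\omega\subseteq V_T$ contains each node $v$ independently with probability $\pi_v$. For $S\subseteq V_T$, $P(S)=1-\prod_{s\in S}(1-\pi_s)$ ($P(\emptyset)=0$). For a node $a$, the sub-tree $A$ rooted at $r_A=a$ consists of $a$ and all its descendants, with node set $V_A$; if $a$ has children $c_1,\dots,c_m$, then $A_i$ ($1\le i\le m$) is the sub-tree rooted at $c_i$, $A_0$ is the sub-tree consisting of the single node $r_A$, $\mathcal{I}_A=\{0,1,\dots,m\}$, and $V_A^I=\bigcup_{i\in I}V_{A_i}$ for $I\subseteq\mathcal{I}_A$. For $Q\subseteq V_T$, $W(Q)$ is the total weight of the edges lying on at least one path from $r_T$ to a node of $Q$. For $S\subseteq V_A$ and $x\le d(r_A)$ the expected profit is $G(S,x)=\sum_{s\in S}p_s\pi_s-\mathbb{E}[W(S\cap\omega)]+x\,P(S)$.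 Characteristic function. For a sub-tree $A$, $I\subseteq\mathcal{I}_A$ and $x\in[0,d(r_A)]$, $f_A^I(x)=\max_{S\subseteq V_A^I}G(S,x)$, and $f_A=f_A^{\mathcal{I}_A}$. A set $S\subseteq V_A^I$ with $G(S,x)=f_A^I(x)$ is an optimal set (for $f_A^I$) at $x$. The matryoshka $\mathcal{M}_A^I$ is the family of all $S\subseteq V_A^I$ such that for some $x\in[0,d(r_A)]$, $S$ is an optimal set at $x$ and no proper superset of $S$ contained in $V_A^I$ is optimal at $x$; $\mathcal{M}_A=\mathcal{M}_A^{\mathcal{I}_A}$. *)

From mathcomp Require Import all_boot all_order all_algebra.
Set Implicit Arguments. Unset Strict Implicit. Unset Printing Implicit Defensive.
Import Order.TTheory GRing.Theory Num.Theory.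
Local Open Scope ring_scope.

(* A rooted tree on a finite node type V is given by its root r and a parent
   map (parent r = r, every node reaches r by iterating parent).  The edge
   between a node v <> r and its parent carries weight w v. *)
Section Tree.
Variables (R : realFieldType) (V : finType) (r : V) (parent : V -> V).
Variables (w pi p : V -> R).

Definition anc (u v : V) : bool :=
  [exists k : 'I_#|V|.+1, iter k parent v == u].

Definition dist (v : V) : R := \sum_(u | (u != r) && anc u v) w u.

Definition Wt (Q : {set V}) : R :=
  \sum_(u | (u != r) && [exists q in Q, anc u q]) w u.

(* probability of the outcome omega of the random set *)
Definition probw (om : {set V}) : R :=
  (\prod_(v in om) pi v) * \prod_(v in ~: om) (1 - pi v).

Definition EW (S : {set V}) : R := \sum_(om : {set V}) probw om * Wt (S :&: om).

Definition Pr (S : {set V}) : R := 1 - \prod_(s in S) (1 - pi s).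

Definition G (S : {set V}) (x : R) : R :=
  \sum_(s in S) p s * pi s - EW S + x * Pr S.

Definition subtree (a : V) : {set V} := [set u | anc a u].
Definition children (a : V) : {set V} := [set c | (c != r) && (parent c == a)].
(* Index set I_A: index 0 is represented by the node a itself,
   index i >= 1 by the child c_i. *)
Definition IA (a : V) : {set V} := a |: children a.
Definition comp (a c : V) : {set V} := if c == a then [set a] else subtree c.
Definition VAI (a : V) (I : {set V}) : {set V} := \bigcup_(c in I) comp a c.

Definition optimal (a : V) (I : {set V}) (x : R) (S : {set V}) : Prop :=
  S \subset VAI a I /\ forall S' : {set V}, S' \subset VAI a I -> G S' x <= G S x.

Definition matryoshka (a : V) (I : {set V}) (S : {set V}) : Prop :=
  exists x : R, [/\ 0 <= x <= dist a, optimal a I x S &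
    forall S' : {set V}, S \proper S' -> S' \subset VAI a I -> ~ optimal a I x S'].

End Tree.

From Pilot Require Import Defs.
From mathcomp Require Import all_boot all_order all_algebra ring lra.
Set Implicit Arguments. Unset Strict Implicit. Unset Printing Implicit Defensive.
Import Order.TTheory GRing.Theory Num.Theory.
Local Open Scope ring_scope.

(* Two node sets X ⊆ V_A^{I1} and Y ⊆ V_A^{I2} are "separated": they
   are disjoint, lie below a, and every common ancestor of a node of X and a
   node of Y is an ancestor of a.  For separated sets the expected profit
   splits as
       G(X ∪ Y, x) = G(X, x) + G(Y, x) + (d(a) - x) P(X) P(Y),
   because the edges shared by root paths to X and to Y are exactly those
   above a, and they are paid once when both X∩ω and Y∩ω are non-empty.
   Consequently, with S2 = S ∩ V_A^{I2} fixed, T ↦ T ∪ S2 transforms G(., x1)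
   on subsets of V_A^{I1} into G(., x) up to a constant, where
   x1 = x + (d(a) - x) P(S2) ∈ [0, d(a)].  Hence S ∩ V_A^{I1} is a maximal
   optimal set at x1, i.e. lies in M_A^{I1}.  Taking I1 = {c} gives the
   decomposition of M_A into single-branch matryoshka sets. *)

Section Ancestors.
Variables (V : finType) (r : V) (parent : V -> V).
Local Notation anc := (anc parent).

(* The bound #|V| built into [anc] is harmless: by the pigeonhole principle
   every iterate of [parent] is already reached within #|V| steps. *)
Lemma ancP u v : reflect (exists k, iter k parent v = u) (anc u v).
Proof.
apply: (iffP existsP) => [[k /eqP <-]|[k Hk]]; first by exists k.
have Hvu : fconnect parent v u by rewrite -Hk fconnect_iter.
have Hbound : (findex parent v u < #|V|.+1)%N.
  by rewrite ltnS (leq_trans (ltnW (findex_max Hvu))) ?max_card.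
by exists (Ordinal Hbound); rewrite /= iter_findex.
Qed.

Lemma anc_refl u : anc u u.
Proof. by apply/ancP; exists 0%N. Qed.

Lemma anc_trans u v x : anc u v -> anc v x -> anc u x.
Proof.
by move=> /ancP [k1 H1] /ancP [k2 H2]; apply/ancP; exists (k1 + k2)%N; rewrite iterD H2.
Qed.

Lemma anc_parent c : anc (parent c) c.
Proof. by apply/ancP; exists 1%N. Qed.

Lemma anc_chain u x q : anc u q -> anc x q -> anc u x \/ anc x u.
Proof.
move=> /ancP [k1 H1] /ancP [k2 H2]; case: (leqP k1 k2) => h.
  by right; apply/ancP; exists (k2 - k1)%N; rewrite -H1 -iterD subnK.
by left; apply/ancP; exists (k1 - k2)%N; rewrite -H2 -iterD subnK // ltnW.
Qed.

Hypothesis Hroot : parent r = r.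
Hypothesis Hreach : forall v, exists k, iter k parent v = r.

(* In a tree the ancestor relation is antisymmetric: a node lying on a cycle
   of [parent] is fixed by a multiple of the cycle length, hence equals r. *)
Lemma anc_antisym u v : anc u v -> anc v u -> u = v.
Proof.
move=> /ancP [k1 H1] /ancP [k2 H2].
have iter_r k : iter k parent r = r by elim: k => //= k ->.
have Hper n : iter (n * (k1 + k2)) parent v = v.
  by elim: n => [|n IH] //; rewrite mulSn iterD IH addnC iterD H1 H2.
have [K HK] := Hreach v.
case: (posnP (k1 + k2)) => [/eqP|pos].
  by rewrite addn_eq0 => /andP [/eqP k1_0 _]; rewrite -H1 k1_0.
have v_r : v = r.
  by rewrite -(Hper K) -(subnK (leq_pmulr K pos)) iterD HK iter_r.
by rewrite -H1 v_r iter_r.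
Qed.

Section Branches.
Variable a : V.
Local Notation branch := (Defs.comp parent a).

Lemma IA_parent c : c \in IA r parent a -> c != a -> parent c = a.
Proof. by rewrite !inE => /orP [/eqP ->|/andP [_ /eqP]]; rewrite ?eqxx. Qed.

Lemma comp_anc c q : c \in IA r parent a -> q \in branch c -> anc a q.
Proof.
rewrite /Defs.comp; case: eqP => [-> _|/eqP ca Hc].
  by rewrite inE => /eqP ->; apply: anc_refl.
by rewrite inE; apply: anc_trans; rewrite -(IA_parent Hc ca) anc_parent.
Qed.

Lemma anc_in_branch c q u : c \in IA r parent a -> q \in branch c ->
  anc u q -> ~~ anc u a -> anc c u.
Proof.
move=> Hc; rewrite /Defs.comp; case: eqP => [-> |/eqP ca]; first by rewrite inE => /eqP -> ->.
rewrite inE => Hcq Huq Hua; case: (anc_chain Huq Hcq) => // /ancP [[|k] Hk].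
  by rewrite -Hk anc_refl.
by move: Hua; rewrite -Hk iterSr (IA_parent Hc ca) => /negP []; apply/ancP; exists k.
Qed.

Lemma siblings_incomparable c1 c2 : c1 \in IA r parent a -> c2 \in IA r parent a ->
  c1 != a -> c2 != a -> c1 != c2 -> ~ anc c1 c2.
Proof.
move=> H1 H2 c1a c2a c12 /ancP [[|k] Hk]; first by move: c12; rewrite -Hk eqxx.
have c1_above_a : anc c1 a by apply/ancP; exists k; rewrite -(IA_parent H2 c2a) -iterSr.
have a_above_c1 : anc a c1 by rewrite -{1}(IA_parent H1 c1a) anc_parent.
by move: c1a; rewrite (anc_antisym c1_above_a a_above_c1) eqxx.
Qed.

Lemma common_anc_branches c1 c2 q1 q2 u :
  c1 \in IA r parent a -> c2 \in IA r parent a -> c1 != c2 ->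
  q1 \in branch c1 -> q2 \in branch c2 ->
  anc u q1 -> anc u q2 -> anc u a.
Proof.
move=> H1 H2 c12 Hq1 Hq2 Hu1 Hu2; apply: contraT => Hua.
have not_a c q : q \in branch c -> anc u q -> c != a.
  move=> Hq Huq; apply: contraNneq Hua => ca.
  by move: Hq Huq; rewrite /Defs.comp ca eqxx inE => /eqP ->.
have [c1a c2a] := (not_a _ _ Hq1 Hu1, not_a _ _ Hq2 Hu2).
case: (anc_chain (anc_in_branch H1 Hq1 Hu1 Hua) (anc_in_branch H2 Hq2 Hu2 Hua)).
  by move/(siblings_incomparable H1 H2 c1a c2a c12).
by move/(siblings_incomparable H2 H1 c2a c1a); rewrite eq_sym => /(_ c12).
Qed.

Lemma comp_disjoint c1 c2 q : c1 \in IA r parent a -> c2 \in IA r parent a ->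
  c1 != c2 -> q \in branch c1 -> q \in branch c2 -> False.
Proof.
move=> H1 H2 c12 Hq1 Hq2.
have q_a : q = a.
  exact: anc_antisym (common_anc_branches H1 H2 c12 Hq1 Hq2 (anc_refl q) (anc_refl q))
                     (comp_anc H1 Hq1).
wlog c1a : c1 c2 H1 H2 c12 Hq1 Hq2 / c1 != a.
  move=> W; case: (eqVneq c1 a) => [c1_a|c1a]; last exact: (W c1 c2).
  apply: (W c2 c1) => //; first by rewrite eq_sym.
  by rewrite -c1_a eq_sym.
move: Hq1; rewrite /Defs.comp (negPf c1a) inE q_a => c1_above_a.
have a_above_c1 : anc a c1 by rewrite -{1}(IA_parent H1 c1a) anc_parent.
by move: c1a; rewrite (anc_antisym c1_above_a a_above_c1) eqxx.
Qed.

Definition separated (X Y : {set V}) : Prop :=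
  [/\ [disjoint X & Y], X \subset subtree parent a, Y \subset subtree parent a &
      forall u x y, x \in X -> y \in Y -> anc u x -> anc u y -> anc u a].

Lemma separatedS (X Y X' Y' : {set V}) :
  X' \subset X -> Y' \subset Y -> separated X Y -> separated X' Y'.
Proof.
move=> sX sY [dXY aX aY cXY]; split.
- exact: disjointWl sX (disjointWr sY dXY).
- exact: subset_trans sX aX.
- exact: subset_trans sY aY.
- by move=> u x y /(subsetP sX) Hx /(subsetP sY) Hy; apply: cXY.
Qed.

Lemma VAI_subtree (I : {set V}) :
  I \subset IA r parent a -> VAI parent a I \subset subtree parent a.
Proof.
move=> HI; apply/subsetP => q /bigcupP [c Hc Hq].
by rewrite inE (comp_anc (subsetP HI _ Hc) Hq).
Qed.

Lemma separated_VAI (I1 I2 X Y : {set V}) :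
  I1 \subset IA r parent a -> I2 \subset IA r parent a -> [disjoint I1 & I2] ->
  X \subset VAI parent a I1 -> Y \subset VAI parent a I2 -> separated X Y.
Proof.
move=> H1 H2 H12 sX sY; apply: separatedS sX sY _.
have branch c1 c2 : c1 \in I1 -> c2 \in I2 ->
    [/\ c1 \in IA r parent a, c2 \in IA r parent a & c1 != c2].
  move=> Hc1 Hc2; rewrite (subsetP H1 _ Hc1) (subsetP H2 _ Hc2).
  by split=> //; apply: contraTneq Hc1 => ->; rewrite (disjointFl H12 Hc2).
split; rewrite ?VAI_subtree //.
- rewrite -setI_eq0; apply/eqP/setP => q; rewrite !inE.
  apply/negP => /andP [/bigcupP [c1 Hc1 Hq1] /bigcupP [c2 Hc2 Hq2]].
  by have [A1 A2 c12] := branch _ _ Hc1 Hc2; apply: (comp_disjoint A1 A2 c12 Hq1 Hq2).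
- move=> u x y /bigcupP [c1 Hc1 Hx] /bigcupP [c2 Hc2 Hy].
  by have [A1 A2 c12] := branch _ _ Hc1 Hc2; apply: common_anc_branches Hx Hy.
Qed.

End Branches.
End Ancestors.

Lemma big_setU_disjoint (T : Type) (idx : T) (op : Monoid.com_law idx) (I : finType)
    (A B : {set I}) (F : I -> T) : [disjoint A & B] ->
  \big[op/idx]_(i in A :|: B) F i = op (\big[op/idx]_(i in A) F i) (\big[op/idx]_(i in B) F i).
Proof. by move=> dAB; rewrite -bigU //; apply: eq_bigl => i; rewrite inE. Qed.

Section Profit.
Variables (R : realFieldType) (V : finType) (r : V) (parent : V -> V).
Variables (w pi p : V -> R).
Local Notation anc := (anc parent).
Local Notation Wt := (Wt r parent w).
Local Notation EW := (EW r parent w pi).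
Local Notation G := (G r parent w pi p).
Local Notation d := (dist r parent w).

Lemma sum_indicator (P Q : pred V) (F : V -> R) :
  \sum_(u | P u && Q u) F u = \sum_(u | P u) F u * (Q u)%:R.
Proof. by rewrite big_mkcondr; apply: eq_bigr => u _; case: (Q u); rewrite ?mulr1 ?mulr0. Qed.

(* Whether the edge above u is used by a root path to a node of Q. *)
Definition reaches (u : V) (Q : {set V}) : bool := [exists q in Q, anc u q].

Lemma reaches_setU u (X Y : {set V}) : reaches u (X :|: Y) = reaches u X || reaches u Y.
Proof.
apply/existsP/orP => [[q /andP [] ]|].
  by rewrite in_setU => /orP [] Hq Huq; [left|right]; apply/existsP; exists q; rewrite Hq.
by case=> /existsP [q /andP [Hq Huq]]; exists q; rewrite in_setU Hq ?orbT.
Qed.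

Lemma reaches_above u a (X : {set V}) : anc u a -> X \subset subtree parent a ->
  reaches u X = (X != set0).
Proof.
move=> Hua sX; apply/existsP/set0Pn => [[q /andP [Hq _]]|[q Hq]]; first by exists q.
by exists q; rewrite Hq (anc_trans Hua _) // -[anc a q]inE (subsetP sX).
Qed.

Lemma Wt_split a (X Y : {set V}) : separated parent a X Y ->
  Wt (X :|: Y) = Wt X + Wt Y - d a * ((X != set0)%:R * (Y != set0)%:R).
Proof.
move=> [_ sX sY cross]; rewrite /Wt /dist !sum_indicator mulr_suml -big_split -sumrB /=.
apply: eq_bigr => u _; rewrite -!/(reaches u _).
have [Hua|Hua] := boolP (anc u a).
  rewrite !(reaches_above Hua) ?subUset ?sX ?sY // setU_eq0.
  by case: (X == set0); case: (Y == set0); rewrite /= ?mulr1 ?mulr0; ring.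
have not_both : ~~ (reaches u X && reaches u Y).
  apply: contraNN Hua => /andP [/existsP [x /andP [Hx Hux]] /existsP [y /andP [Hy Huy]]].
  exact: cross Hx Hy Hux Huy.
rewrite reaches_setU !mulr0 mul0r subr0.
by move: not_both; case: (reaches u X); case: (reaches u Y); rewrite ?mulr0 ?addr0 ?add0r.
Qed.

(* The probability that the random set ω avoids Z, obtained by expanding
   \prod_v ([v ∉ Z] pi v + (1 - pi v)) over all outcomes ω. *)
Lemma probw_avoid (Z : {set V}) :
  \sum_(om : {set V}) probw pi om * (Z :&: om == set0)%:R = \prod_(z in Z) (1 - pi z).
Proof.
have factor i : (if i \in Z then 0 else pi i) + (1 - pi i) = if i \in Z then 1 - pi i else 1.
  by case: (i \in Z); rewrite ?add0r // addrC subrK.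
rewrite [RHS]big_mkcond -(eq_bigr _ (fun i _ => factor i)) bigA_distr.
apply: eq_bigr => om _; rewrite (bigID (mem om)) /= /probw.
have -> : \prod_(i | i \notin om) (if i \in om then (if i \in Z then 0 else pi i) else 1 - pi i)
          = \prod_(v in ~: om) (1 - pi v).
  by apply: eq_big => [v|v /negPf ->]; rewrite ?inE.
have [Zom|/set0Pn [z]] := eqVneq (Z :&: om) set0.
  rewrite mulr1; congr (_ * _); apply: eq_bigr => i om_i; rewrite om_i.
  by case: ifP => // Z_i; move/setP: Zom => /(_ i); rewrite !inE Z_i om_i.
by rewrite inE => /andP [Z_z om_z]; rewrite mulr0 (bigD1 z) //= om_z Z_z !mul0r.
Qed.

Lemma probw_sum1 : \sum_(om : {set V}) probw pi om = 1.
Proof.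
have := probw_avoid set0; rewrite big_set0 => <-.
by apply: eq_bigr => om _; rewrite set0I eqxx mulr1.
Qed.

Section Separated.
Variables (a : V) (X Y : {set V}).
Hypothesis sepXY : separated parent a X Y.

Let disjXY : [disjoint X & Y]. Proof. by case: sepXY. Qed.

(* The expected shared cost d(a) is paid when both parts are hit by ω. *)
Lemma EW_split : EW (X :|: Y) = EW X + EW Y - d a * (Pr pi X * Pr pi Y).
Proof.
(* Inclusion-exclusion for the event "ω hits both X and Y". *)
have both_hit om : ((X :&: om != set0)%:R * (Y :&: om != set0)%:R : R)
    = 1 - (X :&: om == set0)%:R - (Y :&: om == set0)%:R + ((X :|: Y) :&: om == set0)%:R.
  by rewrite setIUl setU_eq0; case: (X :&: om == set0); case: (Y :&: om == set0);
     rewrite /= ?mulr1 ?mulr0; ring.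
rewrite /EW (eq_bigr (fun om => probw pi om * Wt (X :&: om) + probw pi om * Wt (Y :&: om)
    - d a * (probw pi om - probw pi om * (X :&: om == set0)%:R
             - probw pi om * (Y :&: om == set0)%:R
             + probw pi om * ((X :|: Y) :&: om == set0)%:R))); last first.
  move=> om _; rewrite {1}setIUl (Wt_split (separatedS _ _ sepXY)) ?subsetIl //.
  by rewrite both_hit; ring.
rewrite sumrB big_split -mulr_sumr big_split !sumrB /= probw_sum1 !probw_avoid.
by rewrite /Pr big_setU_disjoint //=; ring.
Qed.

Lemma G_split x : G (X :|: Y) x = G X x + G Y x + (d a - x) * (Pr pi X * Pr pi Y).
Proof.
by rewrite /G EW_split /Pr !big_setU_disjoint //=; ring.
Qed.

End Separated.
End Profit.

Section Restriction.
Variables (R : realFieldType) (V : finType) (r : V) (parent : V -> V).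
Variables (w pi p : V -> R).
Hypothesis Hroot : parent r = r.
Hypothesis Hreach : forall v, exists k, iter k parent v = r.
Hypothesis Hpi : forall v, 0 <= pi v <= 1.
Local Notation G := (G r parent w pi p).
Local Notation d := (dist r parent w).
Local Notation optimal := (optimal r parent w pi p).

Lemma Pr_bounds (X : {set V}) : 0 <= Pr pi X <= 1.
Proof.
have prod_ge0 : 0 <= \prod_(s in X) (1 - pi s).
  by apply: prodr_ge0 => s _; rewrite subr_ge0; case/andP: (Hpi s).
have prod_le1 : \prod_(s in X) (1 - pi s) <= 1.
  apply: prodr_ile1 => s _; case/andP: (Hpi s) => pi0 pi1.
  by rewrite subr_ge0 pi1 lerBlDr lerDl pi0.
by rewrite /Pr subr_ge0 prod_le1 lerBlDr lerDl prod_ge0.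
Qed.

Lemma G_shift (T : {set V}) x t : G T (x + t) = G T x + t * Pr pi T.
Proof. by rewrite /G; ring. Qed.

Lemma VAI_setU a (I1 I2 : {set V}) :
  VAI parent a (I1 :|: I2) = VAI parent a I1 :|: VAI parent a I2.
Proof. exact: bigcup_setU. Qed.

Section Split.
Variables (a : V) (I1 I2 S : {set V}) (x : R).
Hypotheses (H1 : I1 \subset IA r parent a) (H2 : I2 \subset IA r parent a)
  (H12 : [disjoint I1 & I2]).
Hypotheses (Hx : 0 <= x <= d a) (Sopt : optimal a (I1 :|: I2) x S).
Let S1 := S :&: VAI parent a I1.
Let S2 := S :&: VAI parent a I2.
(* The point at which S1 is optimal for f_A^{I1}. *)
Let x1 := x + (d a - x) * Pr pi S2.

Let S_split : S = S1 :|: S2.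
Proof. by rewrite -setIUr -VAI_setU; apply/esym/setIidPl; case: Sopt. Qed.

Let G_with_S2 (T : {set V}) :
  T \subset VAI parent a I1 -> G (T :|: S2) x = G T x1 + G S2 x.
Proof.
move=> sT; have sep := separated_VAI Hroot Hreach H1 H2 H12 sT (subsetIr S _).
by rewrite (G_split r w pi p sep) /x1 G_shift; ring.
Qed.

Let union_sub (T : {set V}) :
  T \subset VAI parent a I1 -> T :|: S2 \subset VAI parent a (I1 :|: I2).
Proof. by move=> sT; rewrite VAI_setU setUSS // subsetIr. Qed.

(* x1 is a convex combination of x and d(a). *)
Lemma x1_range : 0 <= x1 <= d a.
Proof.
have /andP [x0 xd] := Hx; have /andP [P0 P1] := Pr_bounds S2.
by apply/andP; split; rewrite /x1; nra.
Qed.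

(* S1 is optimal for f_A^{I1} at x1: compare T ∪ S2 with S = S1 ∪ S2. *)
Lemma restrict_optimal : optimal a I1 x1 S1.
Proof.
split=> [|T sT]; first exact: subsetIr.
by have := Sopt.2 _ (union_sub sT); rewrite {1}S_split !G_with_S2 ?subsetIr // lerD2r.
Qed.

Lemma extend_optimal (T : {set V}) :
  optimal a I1 x1 T -> optimal a (I1 :|: I2) x (T :|: S2).
Proof.
move=> [sT Topt]; split=> [|U sU]; first exact: union_sub.
apply: le_trans (Sopt.2 _ sU) _.
by rewrite {1}S_split !G_with_S2 ?subsetIr // lerD2r; apply: Topt; rewrite subsetIr.
Qed.

Lemma extend_proper (T : {set V}) :
  S1 \proper T -> T \subset VAI parent a I1 -> S \proper T :|: S2.
Proof.
move=> /properP [S1T [t Tt S1t]] sT; apply/properP; split.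
  by rewrite S_split setSU.
exists t; first by rewrite in_setU Tt.
by apply: contraNN S1t => St; rewrite inE St (subsetP sT).
Qed.

End Split.

Lemma matryoshka_restrict a (I1 I2 S : {set V}) :
  I1 \subset IA r parent a -> I2 \subset IA r parent a -> [disjoint I1 & I2] ->
  matryoshka r parent w pi p a (I1 :|: I2) S ->
  matryoshka r parent w pi p a I1 (S :&: VAI parent a I1).
Proof.
move=> H1 H2 H12 [x [Hx Sopt Smax]].
exists (x + (d a - x) * Pr pi (S :&: VAI parent a I2)); split.
- exact: x1_range.
- exact: (restrict_optimal H1 H2 H12 Sopt).
- move=> T S1T sT Topt.
  apply: (Smax (T :|: S :&: VAI parent a I2)).
  + exact: (extend_proper Sopt S1T sT).
  + by rewrite VAI_setU setUSS // subsetIr.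
  + exact: (extend_optimal H1 H2 H12 Sopt Topt).
Qed.

End Restriction.

Theorem proposition7 (R : realFieldType) (V : finType) (r : V) (parent : V -> V)
  (w pi p : V -> R)
  (Hroot : parent r = r)
  (Hreach : forall v, exists k, iter k parent v = r)
  (Hw : forall v, v != r -> 0 <= w v)
  (Hpi : forall v, 0 < pi v <= 1)
  (a : V) :
  (forall I I1 I2 : {set V},
     I \subset IA r parent a -> I = I1 :|: I2 -> [disjoint I1 & I2] ->
     forall S, matryoshka r parent w pi p a I S ->
       matryoshka r parent w pi p a I1 (S :&: VAI parent a I1) /\
       matryoshka r parent w pi p a I2 (S :&: VAI parent a I2)) /\
  (forall S, matryoshka r parent w pi p a (IA r parent a) S ->
     exists F : V -> {set V},
       (forall c, c \in IA r parent a -> matryoshka r parent w pi p a [set c] (F c)) /\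
       S = \bigcup_(c in IA r parent a) F c).
Proof.
have pi01 v : 0 <= pi v <= 1 by case/andP: (Hpi v) => /ltW -> ->.
have restrict := matryoshka_restrict (w := w) (p := p) Hroot Hreach pi01.
split.
  move=> I I1 I2 HI EI H12 S; rewrite EI subUset in HI * => HS; case/andP: HI => H1 H2.
  split; first exact: (restrict a I1 I2 S H1 H2 H12 HS).
  by apply: (restrict a I2 I1 S H2 H1); rewrite 1?disjoint_sym // setUC.
move=> S HS; exists (fun c => S :&: Defs.comp parent a c); split.
  move=> c Hc; have -> : Defs.comp parent a c = VAI parent a [set c] by rewrite /VAI big_set1.
  apply: (restrict _ _ (IA r parent a :\ c)); rewrite ?sub1set ?subsetDl //.
    by rewrite disjoints1 !inE eqxx.
  by rewrite setD1K.
have [_ [_ [S_sub _] _]] := HS.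
by rewrite -big_distrr /=; apply/esym/setIidPl.
Qed.
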